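(* Let $H\in\mathbb{R}^{n\times n}$ and $M\in\mathbb{R}^{m\times m}$ be symmetric positive semidefinite and $A\in\mathbb{R}^{m\times n}$. Let $l\neq k$ be indices and $\mathcal{B}\subseteq\{1,\dots,n\}\setminus\{l,k\}$. Assume that the linear system in the unknowns $(\Delta x_l,\Delta x_k,\Delta x_{\mathcal{B}},\Delta y,\Delta z_l,\Delta z_k)$ \[ \begin{aligned} h_{ll}\Delta x_l+h_{kl}\Delta x_k+h_{\mathcal{B}l}^T\Delta x_{\mathcal{B}}-a_l^T\Delta y-\Delta z_l&=0,\\ h_{kl}\Delta x_l+h_{kk}\Delta x_k+h_{\mathcal{B}k}^T\Delta x_{\mathcal{B}}-a_k^T\Delta y-\Delta z_k&=0,\\ h_{\mathcal{B}l}\Delta x_l+h_{\mathcal{B}k}\Delta x_k+H_{\mathcal{B}\mathcal{B}}\Delta x_{\mathcal{B}}-A_{\mathcal{B}}^T\Delta y&=0,\\ a_l\Delta x_l+a_k\Delta x_k+A_{\mathcal{B}}\Delta x_{\mathcal{B}}+M\Delta y&=0,\\ \Delta x_l+\Delta z_l&=1,\\ \Delta x_k&=0 \end{aligned} \] has a unique solution, and that in it $\Delta z_k\neq 0$. Then the matrices \[ K_l=\begin{pmatrix}h_{ll}&h_{\mathcal{B}l}^T&a_l^T\\ h_{\mathcal{B}l}&H_{\mathcal{B}\mathcal{B}}&A_{\mathcal{B}}^T\\ a_l&A_{\mathcal{B}}&-M\end{pmatrix}\quad\text{and}\quad K_k=\begin{pmatrix}h_{kk}&h_{\mathcal{B}k}^T&a_k^T\\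 h_{\mathcal{B}k}&H_{\mathcal{B}\mathcal{B}}&A_{\mathcal{B}}^T\\ a_k&A_{\mathcal{B}}&-M\end{pmatrix} \] are nonsingular.
   Context: $h_{ij}$ denotes the $(i,j)$ entry of $H$; $h_{\mathcal{B}j}$ the column vector $(h_{ij})_{i\in\mathcal{B}}$; $H_{\mathcal{B}\mathcal{B}}$ the principal submatrix of $H$ with rows and columns in $\mathcal{B}$; $a_j$ the $j$th column of $A$; $A_{\mathcal{B}}$ the matrix of columns of $A$ indexed by $\mathcal{B}$. *)

From HB Require Import structures.
From mathcomp Require Import all_boot all_order all_algebra.
Set Implicit Arguments. Unset Strict Implicit. Unset Printing Implicit Defensive.
Import Order.TTheory GRing.Theory Num.Theory.
Local Open Scope ring_scope.

Section Defs.
Variable R : realFieldType.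

Definition psd (n : nat) (H : 'M[R]_n) : Prop :=
  H^T = H /\ forall x : 'cV[R]_n, 0 <= (x^T *m H *m x) 0 0.

(* index set B; its elements are enumerated (increasingly) by enum_val *)
Definition subB n (B : {set 'I_n}) (i : 'I_#|B|) : 'I_n := enum_val i.

Definition HBB n (H : 'M[R]_n) (B : {set 'I_n}) : 'M[R]_#|B| :=
  \matrix_(i, j) H (subB i) (subB j).
Definition hBcol n (H : 'M[R]_n) (B : {set 'I_n}) (j : 'I_n) : 'cV[R]_#|B| :=
  \col_i H (subB i) j.
Definition AB m n (A : 'M[R]_(m, n)) (B : {set 'I_n}) : 'M[R]_(m, #|B|) :=
  \matrix_(i, j) A i (subB j).
Definition acol m n (A : 'M[R]_(m, n)) (j : 'I_n) : 'cV[R]_m := col j A.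

Definition Kmat m n (H : 'M[R]_n) (A : 'M[R]_(m, n)) (M : 'M[R]_m)
    (B : {set 'I_n}) (j : 'I_n) : 'M[R]_(1 + (#|B| + m)) :=
  block_mx (H j j)%:M (row_mx (hBcol H B j)^T (acol A j)^T)
           (col_mx (hBcol H B j) (acol A j))
           (block_mx (HBB H B) (AB A B)^T (AB A B) (- M)).

Definition lin_system m n (H : 'M[R]_n) (A : 'M[R]_(m, n)) (M : 'M[R]_m)
    (l k : 'I_n) (B : {set 'I_n})
    (dxl dxk : R) (dxB : 'cV[R]_#|B|) (dy : 'cV[R]_m) (dzl dzk : R) : Prop :=
  (H l l * dxl + H k l * dxk + ((hBcol H B l)^T *m dxB) 0 0
        - ((acol A l)^T *m dy) 0 0 - dzl = 0) /\ (
      H k l * dxl + H k k * dxk + ((hBcol H B k)^T *m dxB) 0 0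
        - ((acol A k)^T *m dy) 0 0 - dzk = 0) /\ (
      dxl *: hBcol H B l + dxk *: hBcol H B k + HBB H B *m dxB
        - (AB A B)^T *m dy = 0) /\ (
      dxl *: acol A l + dxk *: acol A k + AB A B *m dxB + M *m dy = 0) /\ (
      dxl + dzl = 1) /\ dxk = 0.

End Defs.

Arguments lin_system [R m n] H A M l k B dxl dxk dxB dy dzl dzk.

(* Let z = (al, u, w) be in the kernel of K_j, j in {l, k}, and put
   x := al e_j + E_B^T u.  The kernel equations say x^T (H x + A^T w) = 0 and
   A x = M w, so x^T H x + w^T M w = 0; by semidefiniteness H x = 0, M w = 0,
   hence A x = 0, a_j^T w = 0 and A_B^T w = 0.
   Since the system is linear in its unknowns and in the right-hand side r of
   the equation dx_l + dz_l = r, uniqueness for r = 1 means that every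
   solution for a right-hand side r is r times the given one.  Feeding it
   (0, 0, 0, w, -a_l^T w, -a_k^T w) shows w = 0, and, for j = l, feeding it
   (al, 0, u, 0, 0, 0) shows al dz_k = 0.  For j = k one has instead
   al dz_k = x^T (H dx - A^T dy - dz) = (H x)^T dx - (A x)^T dy = 0.  As
   dz_k <> 0 this gives al = 0, then u = 0, so z = 0. *)

From HB Require Import structures.
From mathcomp Require Import all_boot all_order all_algebra.
From mathcomp Require Import ring lra.
Import Order.TTheory GRing.Theory Num.Theory.
Local Open Scope ring_scope.

Section Selection.
Variables (R : realFieldType) (m n : nat) (B : {set 'I_n}).

Definition selB : 'M[R]_(#|B|, n) := rowsub (@subB n B) 1%:M.

Lemma selB_mul p (P : 'M[R]_(n, p)) : selB *m P = rowsub (@subB n B) P.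
Proof. by rewrite mul_rowsub_mx mul1mx. Qed.

Lemma mul_tr_selB p (P : 'M[R]_(p, n)) : P *m selB^T = colsub (@subB n B) P.
Proof.
by rewrite -[P]trmxK -trmx_mul selB_mul; apply/matrixP => i j; rewrite !mxE.
Qed.

Lemma hBcolE (H : 'M[R]_n) q : hBcol H B q = selB *m (H *m delta_mx q 0).
Proof. by rewrite selB_mul -colE; apply/matrixP => i j; rewrite !mxE. Qed.

Lemma HBBE (H : 'M[R]_n) : HBB H B = selB *m (H *m selB^T).
Proof. by rewrite mul_tr_selB selB_mul; apply/matrixP => i j; rewrite !mxE. Qed.

Lemma ABE (A : 'M[R]_(m, n)) : AB A B = A *m selB^T.
Proof. by rewrite mul_tr_selB; apply/matrixP => i j; rewrite !mxE. Qed.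

End Selection.

Arguments selB {R n} B.

Section Psd.
Variables (R : realFieldType) (n : nat).

Lemma trmx_mul_self_eq0 (y : 'cV[R]_n) : (y^T *m y) 0 0 = 0 -> y = 0.
Proof.
rewrite mxE => /eqP; rewrite psumr_eq0 => [/allP y0|i _]; last first.
  by rewrite mxE -expr2 sqr_ge0.
apply/matrixP => i j; rewrite ord1 mxE.
by have /implyP/(_ isT) := y0 i (mem_index_enum i); rewrite mxE mulf_eq0 orbb => /eqP.
Qed.

Lemma psd_quad_eq0 (H : 'M[R]_n) (x : 'cV[R]_n) :
  psd H -> (x^T *m H *m x) 0 0 = 0 -> H *m x = 0.
Proof.
move=> [HT Hge0] qx0; set y := H *m x.
set s := (y^T *m y) 0 0.
have cross_yx : (y^T *m H *m x) 0 0 = s by rewrite -mulmxA.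
have cross_xy : (x^T *m H *m y) 0 0 = s by rewrite /s /y trmx_mul HT mulmxA.
have quad t : 0 <= 2 * t * s + t ^+ 2 * (y^T *m H *m y) 0 0.
  have := Hge0 (x + t *: y).
  rewrite [_^T]linearD /= linearZ /= mulmxDr !mulmxDl -!scalemxAl -!scalemxAr.
  move: qx0 cross_xy cross_yx.
  move: (x^T *m H *m x) (x^T *m H *m y) (y^T *m H *m x) (y^T *m H *m y) => P Q S C.
  rewrite !mxE => -> -> ->; lra.
set c := (y^T *m H *m y) 0 0 in quad.
have c_ge0 : 0 <= c by exact: Hge0.
(* At t = -s/(c+1) the right-hand side of [quad] is -t^2 (c+2). *)
have s0 : s = 0.
  have ht : - s / (c + 1) * (c + 1) = - s by rewrite mulfVK // lt0r_neq0 // ltr_wpDl.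
  move: (quad (- s / (c + 1))) ht; move: (- s / (c + 1)) => t; nra.
exact: trmx_mul_self_eq0.
Qed.

End Psd.

Lemma psd_saddle_null (R : realFieldType) m n (H : 'M[R]_n) (M : 'M[R]_m)
    (A : 'M[R]_(m, n)) (x : 'cV[R]_n) (w : 'cV[R]_m) :
  psd H -> psd M -> x^T *m (H *m x + A^T *m w) = 0 -> A *m x = M *m w ->
  H *m x = 0 /\ M *m w = 0.
Proof.
move=> psdH psdM xKx Ax; have [MT _] := psdM.
have cross : x^T *m (A^T *m w) = w^T *m M *m w.
  by rewrite mulmxA -trmx_mul Ax trmx_mul MT.
have /(congr1 (fun P : 'M_1 => P 0 0)) := xKx.
rewrite mulmxDr cross mulmxA mxE [in RHS]mxE.
have := psdH.2 x; have := psdM.2 w.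
move=> qw_ge0 qx_ge0 sum0.
split; apply: psd_quad_eq0 => //; lra.
Qed.

Definition lift {R : realFieldType} {n} (B : {set 'I_n}) (j : 'I_n) (al : R)
    (u : 'cV[R]_#|B|) : 'cV[R]_n :=
  al *: delta_mx j 0 + (selB B)^T *m u.

Section Lift.
Context {R : realFieldType} {m n : nat} {H : 'M[R]_n} {A : 'M[R]_(m, n)}.
Context {B : {set 'I_n}}.
Hypothesis HT : H^T = H.

Lemma lift_tr j (al : R) (u : 'cV[R]_#|B|) :
  (lift B j al u)^T = al *: delta_mx 0 j + u^T *m selB B.
Proof. by rewrite [_^T]linearD linearZ /= trmx_mul trmxK trmx_delta. Qed.

Lemma mulmx_delta_entry (q j : 'I_n) :
  (delta_mx 0 q : 'rV_n) *m (H *m delta_mx j 0) = (H q j)%:M.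
Proof.
by rewrite -colE -rowE; apply/matrixP => a b; rewrite !ord1 !mxE eqxx mulr1n.
Qed.

Lemma tr_hBcol q : (hBcol H B q)^T = (delta_mx 0 q : 'rV_n) *m (H *m (selB B)^T).
Proof. by rewrite hBcolE !trmx_mul HT trmx_delta mulmxA. Qed.

Lemma delta_H_lift q j (al : R) (u : 'cV[R]_#|B|) :
  (delta_mx 0 q : 'rV_n) *m (H *m lift B j al u)
  = (al * H q j)%:M + (hBcol H B q)^T *m u.
Proof.
rewrite mulmxDr mulmxDr -!scalemxAr mulmx_delta_entry tr_hBcol !mulmxA.
by rewrite scale_scalar_mx mulrC.
Qed.

Lemma selB_H_lift j (al : R) (u : 'cV[R]_#|B|) :
  selB B *m (H *m lift B j al u) = al *: hBcol H B j + HBB H B *m u.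
Proof. by rewrite !mulmxDr -!scalemxAr hBcolE HBBE !mulmxA. Qed.

Lemma delta_AT j (w : 'cV[R]_m) :
  (delta_mx 0 j : 'rV_n) *m (A^T *m w) = (acol A j)^T *m w.
Proof. by rewrite /acol colE trmx_mul trmx_delta mulmxA. Qed.

Lemma selB_AT (w : 'cV[R]_m) : selB B *m (A^T *m w) = (AB A B)^T *m w.
Proof. by rewrite ABE trmx_mul trmxK mulmxA. Qed.

Lemma A_lift j (al : R) (u : 'cV[R]_#|B|) :
  A *m lift B j al u = al *: acol A j + AB A B *m u.
Proof. by rewrite mulmxDr -scalemxAr /acol colE ABE mulmxA. Qed.

End Lift.

Section KmatKernel.
Context {R : realFieldType} {m n : nat} {H : 'M[R]_n} {M : 'M[R]_m}.
Context {A : 'M[R]_(m, n)} {B : {set 'I_n}} {j : 'I_n}.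
Hypotheses (psdH : psd H) (psdM : psd M).

Lemma Kmat_kernel (al : R) (u : 'cV[R]_#|B|) (w : 'cV[R]_m) :
  Kmat H A M B j *m col_mx al%:M (col_mx u w) = 0 ->
  [/\ H *m lift B j al u = 0, A *m lift B j al u = 0, M *m w = 0,
      (acol A j)^T *m w = 0 & (AB A B)^T *m w = 0].
Proof.
have [HT _] := psdH.
rewrite /Kmat mul_block_col mul_row_col mul_block_col mul_col_mx add_col_mx.
rewrite -col_mx0 => /eq_col_mx[Kj]; rewrite -col_mx0 => /eq_col_mx[KB KM].
set x := lift B j al u.
have grad_j : (delta_mx 0 j : 'rV_n) *m (H *m x + A^T *m w) = 0.
  by rewrite mulmxDr delta_H_lift // delta_AT -Kj -scalar_mxM mulrC addrA.
have grad_B : selB B *m (H *m x + A^T *m w) = 0.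
  by rewrite mulmxDr selB_H_lift // selB_AT -KB mul_mx_scalar addrA.
have Ax : A *m x = M *m w.
  by apply/eqP; rewrite A_lift -subr_eq0 -KM mul_mx_scalar mulNmx addrA.
have [Hx Mw] : H *m x = 0 /\ M *m w = 0.
  apply: psd_saddle_null Ax => //.
  by rewrite lift_tr // mulmxDl -scalemxAl -mulmxA grad_j grad_B scaler0 mulmx0 addr0.
move: grad_j grad_B; rewrite Hx !add0r delta_AT selB_AT.
by split; rewrite // Ax.
Qed.

End KmatKernel.

Section UniqueSolution.
Context {R : realFieldType} {m n : nat} {H : 'M[R]_n} {M : 'M[R]_m}.
Context {A : 'M[R]_(m, n)} {l k : 'I_n} {B : {set 'I_n}}.

(* [lin_system] is [lin_system_rhs 1]. *)
Definition lin_system_rhs (r : R) (dxl dxk : R) (dxB : 'cV[R]_#|B|)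
    (dy : 'cV[R]_m) (dzl dzk : R) : Prop :=
  (H l l * dxl + H k l * dxk + ((hBcol H B l)^T *m dxB) 0 0
        - ((acol A l)^T *m dy) 0 0 - dzl = 0) /\ (
      H k l * dxl + H k k * dxk + ((hBcol H B k)^T *m dxB) 0 0
        - ((acol A k)^T *m dy) 0 0 - dzk = 0) /\ (
      dxl *: hBcol H B l + dxk *: hBcol H B k + HBB H B *m dxB
        - (AB A B)^T *m dy = 0) /\ (
      dxl *: acol A l + dxk *: acol A k + AB A B *m dxB + M *m dy = 0) /\ (
      dxl + dzl = r) /\ dxk = 0.

Lemma lin_system_rhs_comb (c : R) {r r' x1 x2 xB y z1 z2 x1' x2' xB' y' z1' z2'} :
  lin_system_rhs r x1 x2 xB y z1 z2 ->
  lin_system_rhs r' x1' x2' xB' y' z1' z2' ->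
  lin_system_rhs (c * r + r') (c * x1 + x1') (c * x2 + x2') (c *: xB + xB')
     (c *: y + y') (c * z1 + z1') (c * z2 + z2').
Proof.
move=> [e1 [e2 [e3 [e4 [e5 e6]]]]] [f1 [f2 [f3 [f4 [f5 f6]]]]].
have comb (a a' b : R) : a = 0 -> a' = 0 -> b = c * a + a' -> b = 0.
  by move=> -> -> ->; rewrite mulr0 addr0.
split; [|split; [|split; [|split; [|split]]]]; last 2 first.
- by rewrite -e5 -f5; ring.
- by rewrite e6 f6 mulr0 addr0.
- rewrite !mulmxDr -!scalemxAr ![(_ + _ : 'M_1) 0 0]mxE ![(_ *: _ : 'M_1) 0 0]mxE.
  by apply: (comb _ _ _ e1 f1); ring.
- rewrite !mulmxDr -!scalemxAr ![(_ + _ : 'M_1) 0 0]mxE ![(_ *: _ : 'M_1) 0 0]mxE.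
  by apply: (comb _ _ _ e2 f2); ring.
- apply/matrixP => i j; move/matrixP/(_ i j): e3; move/matrixP/(_ i j): f3.
  rewrite !mulmxDr -!scalemxAr !mxE => f3 e3.
  by apply: (comb _ _ _ e3 f3); ring.
- apply/matrixP => i j; move/matrixP/(_ i j): e4; move/matrixP/(_ i j): f4.
  rewrite !mulmxDr -!scalemxAr !mxE => f4 e4.
  by apply: (comb _ _ _ e4 f4); ring.
Qed.

Context {dxl dxk : R} {dxB : 'cV[R]_#|B|} {dy : 'cV[R]_m} {dzl dzk : R}.
Hypothesis sol : lin_system H A M l k B dxl dxk dxB dy dzl dzk.
Hypothesis sol_uniq : forall (dxl' dxk' : R) (dxB' : 'cV[R]_#|B|)
    (dy' : 'cV[R]_m) (dzl' dzk' : R),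
  lin_system H A M l k B dxl' dxk' dxB' dy' dzl' dzk' ->
  (dxl', dxk', dxB', dy', dzl', dzk') = (dxl, dxk, dxB, dy, dzl, dzk).

Lemma lin_system_rhs_scale {r x1 x2 xB y z1 z2} :
  lin_system_rhs r x1 x2 xB y z1 z2 ->
  [/\ x1 = r * dxl, xB = r *: dxB, y = r *: dy, z1 = r * dzl & z2 = r * dzk].
Proof.
move=> solD; have := lin_system_rhs_comb (1 - r) sol solD.
rewrite mulr1 subrK => /sol_uniq[ex1 _ exB ey ez1 ez2].
have scale_eq (V : lmodType R) (v v' : V) : (1 - r) *: v + v' = v -> v' = r *: v.
  by move/(canRL (addKr _)); rewrite scalerBl scale1r opprB subrK.
by split; [exact: (scale_eq R^o) ex1 | exact: scale_eq exB | exact: scale_eq ey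
  | exact: (scale_eq R^o) ez1 | exact: (scale_eq R^o) ez2].
Qed.

Hypothesis dzk_neq0 : dzk != 0.

Lemma kernel_dual_eq0 j (w : 'cV[R]_m) : j = l \/ j = k ->
  M *m w = 0 -> (acol A j)^T *m w = 0 -> (AB A B)^T *m w = 0 -> w = 0.
Proof.
move=> jlk Mw ajw ABw; set c := ((acol A l)^T *m w) 0 0.
have solD : lin_system_rhs (- c) 0 0 0 w (- c) (- ((acol A k)^T *m w) 0 0).
  rewrite /lin_system_rhs !mulr0 !scale0r !mulmx0 Mw ABw mxE !add0r -/c.
  by rewrite !opprK !addNr oppr0.
have [_ _ wE _ dzkE] := lin_system_rhs_scale solD.
suff c0 : c = 0 by rewrite wE c0 oppr0 scale0r.
case: jlk => jE; subst j; first by rewrite /c ajw mxE.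
apply/eqP; move: dzkE; rewrite ajw mxE oppr0 mulNr => /esym/eqP.
by rewrite oppr_eq0 mulf_eq0 (negPf dzk_neq0) orbF.
Qed.

Hypothesis HT : H^T = H.

Lemma kernel_lift_l_eq0 (al : R) (u : 'cV[R]_#|B|) :
  H *m lift B l al u = 0 -> A *m lift B l al u = 0 -> al = 0 /\ u = 0.
Proof.
move=> Hx Ax.
have row_eq0 q : al * H q l + ((hBcol H B q)^T *m u) 0 0 = 0.
  have /(congr1 (fun P : 'M_1 => P 0 0)) := delta_H_lift HT q l al u.
  by rewrite Hx mulmx0 [(_ + _ : 'M_1) 0 0]mxE !mxE eqxx mulr1n => <-.
have solD : lin_system_rhs al al 0 u 0 0 0.
  rewrite /lin_system_rhs !mulr0 !scale0r !mulmx0 ![(0 : 'M_1) 0 0]mxE !addr0 !subr0.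
  rewrite ![H _ l * al]mulrC !row_eq0 -selB_H_lift // Hx mulmx0 -A_lift Ax.
  by do !split.
have [_ uE _ _ dzkE] := lin_system_rhs_scale solD.
have al0 : al = 0.
  by apply/eqP; move: dzkE => /esym/eqP; rewrite mulf_eq0 (negPf dzk_neq0) orbF.
by split; rewrite // uE al0 scale0r.
Qed.

Lemma kernel_lift_k_eq0 (al : R) (u : 'cV[R]_#|B|) :
  H *m lift B k al u = 0 -> A *m lift B k al u = 0 -> al = 0.
Proof.
move=> Hx Ax; have [_ [e2 [e3 [_ [_ e6]]]]] := sol.
set X := lift B l dxl dxB.
have grad_k : ((delta_mx 0 k : 'rV_n) *m (H *m X - A^T *m dy)) 0 0 = dzk.
  rewrite mulmxBr delta_H_lift // delta_AT ![(_ + _ : 'M_1) 0 0]mxE.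
  rewrite [(- _ : 'M_1) 0 0]mxE [(_%:M : 'M_1) 0 0]mxE eqxx mulr1n.
  move: e2; rewrite e6 mulr0 addr0 => e2; lra.
have grad_B : selB B *m (H *m X - A^T *m dy) = 0.
  by rewrite mulmxBr selB_H_lift // selB_AT -e3 e6 scale0r addr0.
have : ((lift B k al u)^T *m (H *m X - A^T *m dy)) 0 0 = al * dzk.
  by rewrite lift_tr // mulmxDl -scalemxAl -mulmxA grad_B mulmx0 addr0 mxE grad_k.
rewrite mulmxBr !mulmxA -[in _ *m H]HT -!trmx_mul Hx Ax !trmx0 !mul0mx subrr mxE.
by move/esym/eqP; rewrite mulf_eq0 (negPf dzk_neq0) orbF => /eqP.
Qed.

End UniqueSolution.

Lemma nonunitmx_kernel (R : fieldType) n (K : 'M[R]_n) :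
  K \notin unitmx -> exists2 z : 'cV[R]_n, z != 0 & K *m z = 0.
Proof.
rewrite -unitmx_tr unitmxE unitfE negbK => /det0P[v v0 vK].
by exists v^T; rewrite ?trmx_eq0 // -[K]trmxK -trmx_mul vK trmx0.
Qed.

Theorem proposition10 (R : realFieldType) (m n : nat)
    (H : 'M[R]_n) (M : 'M[R]_m) (A : 'M[R]_(m, n))
    (l k : 'I_n) (B : {set 'I_n}) :
  psd H -> psd M ->
  l != k -> l \notin B -> k \notin B ->
  (exists (dxl dxk : R) (dxB : 'cV[R]_#|B|) (dy : 'cV[R]_m) (dzl dzk : R),
      [/\ lin_system H A M l k B dxl dxk dxB dy dzl dzk,
          dzk != 0 &
          forall (dxl' dxk' : R) (dxB' : 'cV[R]_#|B|) (dy' : 'cV[R]_m)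
                 (dzl' dzk' : R),
            lin_system H A M l k B dxl' dxk' dxB' dy' dzl' dzk' ->
            (dxl', dxk', dxB', dy', dzl', dzk') = (dxl, dxk, dxB, dy, dzl, dzk)]) ->
  Kmat H A M B l \in unitmx /\ Kmat H A M B k \in unitmx.
Proof.
move=> psdH psdM _ _ _ [dxl [dxk [dxB [dy [dzl [dzk [sol dzk0 sol_uniq]]]]]]].
suff Kj_unit j : j = l \/ j = k -> Kmat H A M B j \in unitmx.
  by split; apply: Kj_unit; [left | right].
move=> jlk; apply: contraT => /nonunitmx_kernel[z].
rewrite -[z]vsubmxK -[dsubmx z]vsubmxK (mx11_scalar (usubmx z)).
move: (usubmx z 0 0) (usubmx (dsubmx z)) (dsubmx (dsubmx z)) => al u w z0 Kz.
have [Hx Ax Mw ajw ABw] := Kmat_kernel psdH psdM _ _ _ Kz.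
have w0 := kernel_dual_eq0 sol sol_uniq dzk0 _ _ jlk Mw ajw ABw.
have [al0 u0] : al = 0 /\ u = 0.
  have HT := psdH.1.
  case: jlk => jE; subst j; first exact: (kernel_lift_l_eq0 sol sol_uniq dzk0 HT).
  have al0 := kernel_lift_k_eq0 sol dzk0 HT _ _ Hx Ax.
  have liftE : lift B k al u = lift B l 0 u by rewrite /lift al0 !scale0r.
  rewrite liftE in Hx Ax.
  by have [_ u0] := kernel_lift_l_eq0 sol sol_uniq dzk0 HT _ _ Hx Ax.
by move: z0; rewrite al0 u0 w0 -scalemx1 scale0r !col_mx0 eqxx.
Qed.
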